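(* Let $\Phi=(A;\{E_i\}_{i=0}^d;A^*;\{E^*_i\}_{i=0}^d)$ be a tridiagonal system on $V$ with $d\ge1$, such that $(A,A^* )$ satisfies the $q$-Serre relations, with $E_iV$ the eigenspace of $A$ for $\theta_i=q^{2i-d}$ and $E^*_iV$ the eigenspace of $A^*$ for $\theta^*_i=q^{d-2i}$. Let $P(x)=\sum_{i=0}^d\frac{(-1)^i\zeta_ix^i}{([i]^!_q)^2}$ be the Drinfel'd polynomial of the split sequence $\{\zeta_i\}_{i=0}^d$ of $\Phi$. Then $P\!\left(\frac{1}{(q-q^{-1})^2}\right)\ne0$.
   Context: $\mathcal K$ is an algebraically closed field; $V$ is a nonzero finite-dimensional vector space over $\mathcal K$; $q\in\mathcal K$ is nonzero and not a root of unity; $[i]_q=\frac{q^i-q^{-i}}{q-q^{-1}}$, $[i]^!_q=\prod_{n=1}^i[n]_q$. The $q$-Serre relations for $(X,Y)$: $X^3Y-[3]_qX^2YX+[3]_qXYX^2-YX^3=0$ and $Y^3X-[3]_qY^2XY+[3]_qYXY^2-XY^3=0$. Primitive idempotent of a diagonalizable $X$ for eigenvalue $\lambda_i$: $\prod_{j\ne i}\frac{X-\lambda_jI}{\lambda_i-\lambda_j}$. A tridiagonal system on $V$ is a sequence $(A;\{E_i\}_{i=0}^d;A^*;\{E^*_i\}_{i=0}^d)$ with $A,A^*$ diagonalizable, $\{E_i\}$, $\{E^*_i\}$ orderings of their primitive idempotents, $E_iA^*E_j=0$ and $E^*_iAE^*_j=0$ when $|i-j|>1$, and no subspaces other than $0,V$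 invariant under both $A$ and $A^*$. It is known that $\dim E^*_0V=1$. Split sequence: with $\tau_i(x)=\prod_{j=0}^{i-1}(x-\theta_j)$, $E^*_0\tau_i(A)$ acts on $E^*_0V$ as a scalar $\chi_i$, and $\zeta_i=\prod_{j=1}^i(\theta^*_0-\theta^*_j)\chi_i$. *)

From HB Require Import structures.
From mathcomp Require Import all_boot all_order all_algebra.
Set Implicit Arguments. Unset Strict Implicit. Unset Printing Implicit Defensive.
Import Order.TTheory GRing.Theory Num.Theory.
Local Open Scope ring_scope.

(* Linear maps on V = K^(n.+1) are represented by square matrices acting on
   COLUMN vectors (so the matrix product X *m Y is the composite "Y then X",
   as in the paper). *)

Section Defs.
Variable K : fieldType.

Definition not_root_of_unity (q : K) := forall k : nat, (0 < k)%N -> q ^+ k != 1.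

Definition qint (q : K) (i : nat) : K := (q ^+ i - q ^- i) / (q - q^-1).
Definition qfact (q : K) (i : nat) : K := \prod_(1 <= m < i.+1) qint q m.

Definition qSerre (q : K) (n : nat) (X Y : 'M[K]_n) :=
  X *m X *m X *m Y - qint q 3 *: (X *m X *m Y *m X)
    + qint q 3 *: (X *m Y *m X *m X) - Y *m X *m X *m X = 0 /\
  Y *m Y *m Y *m X - qint q 3 *: (Y *m Y *m X *m Y)
    + qint q 3 *: (Y *m X *m Y *m Y) - X *m Y *m Y *m Y = 0.

Definition prim_idem (n : nat) (X : 'M[K]_n.+1) (th : nat -> K) (d i : nat)
  : 'M[K]_n.+1 :=
  \prod_(j < d.+1 | (j : nat) != i) ((th i - th j)^-1 *: (X - (th j)%:M)).

Definition tau_mx (n : nat) (X : 'M[K]_n.+1) (th : nat -> K) (i : nat)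
  : 'M[K]_n.+1 :=
  \prod_(j < i) (X - (th j)%:M).

Definition tridiagonal_system (n d : nat) (A As : 'M[K]_n.+1)
    (th ths : nat -> K) :=
  let E := prim_idem A th d in
  let Es := prim_idem As ths d in
  [/\ diagonalizable A /\ diagonalizable As,
      (forall a, eigenvalue A a <-> exists2 i, (i <= d)%N & a = th i) /\
      (forall a, eigenvalue As a <-> exists2 i, (i <= d)%N & a = ths i),
      (forall i j, (i <= d)%N -> (j <= d)%N -> th i = th j -> i = j) /\
      (forall i j, (i <= d)%N -> (j <= d)%N -> ths i = ths j -> i = j),
      (forall i j, (i <= d)%N -> (j <= d)%N -> (i.+1 < j)%N || (j.+1 < i)%N ->
          E i *m As *m E j = 0 /\ Es i *m A *m Es j = 0) &
      (* irreducibility: the only subspaces W of column vectors with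
         A W <= W and As W <= W are 0 and V.  W is the column space of U,
         i.e. the row space of U^T. *)
      (forall U : 'M[K]_n.+1,
          stablemx U^T A^T -> stablemx U^T As^T ->
          (U == 0) || row_full U)].

Definition split_zeta (th ths : nat -> K) (chi : nat -> K) (i : nat) : K :=
  (\prod_(1 <= j < i.+1) (ths 0%N - ths j)) * chi i.

Definition drinfeld_poly (q : K) (d : nat) (zeta : nat -> K) : {poly K} :=
  \poly_(i < d.+1) ((-1) ^+ i * zeta i / (qfact q i) ^+ 2).

End Defs.

(* Writing E_0 = L_0(A) with L_0 the Lagrange polynomial of the node θ_0 and
   expanding L_0 in the Newton basis τ_i(x) = (x - θ_0)...(x - θ_{i-1}) gives
   E*_0 E_0 E*_0 = (Σ_i χ_i / ((θ_0 - θ_1)...(θ_0 - θ_i))) E*_0.  For θ_i = q^(2i-d)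
   and θ*_i = q^(d-2i) one has (θ_0 - θ_j)(θ*_0 - θ*_j) = -([j]_q (q - q^-1))^2, so
   this scalar is exactly P((q - q^-1)^-2).
   It remains to see that E*_0 E_0 E*_0 is nonzero, which holds in any tridiagonal
   system.  Letting the maps act on row vectors (through transposes), the spaces
     S_i = {v | v E_j = 0 for j < i and v E*_j = 0 for j >= i}
   satisfy S_i (A - θ_i) ⊆ S_(i+1) and S_(i+1) (A* - θ*_i) ⊆ S_i by tridiagonality,
   so their sum is invariant under A and A*; it is killed by E_0 ≠ 0, hence is 0.
   Thus S_1 = 0: no nonzero M has M E*_0 = M and M E_0 = 0.  Applied to
   M = E*_0 E_0 (with the roles of A and A* exchanged) and then to M = E*_0, this
   shows E*_0 E_0 E*_0 ≠ 0. *)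

From HB Require Import structures.
From mathcomp Require Import all_boot all_order all_algebra.
From mathcomp Require Import ring.
Set Implicit Arguments.
Unset Strict Implicit.
Unset Printing Implicit Defensive.
Import Order.TTheory GRing.Theory Num.Theory.
Local Open Scope ring_scope.

Section LagrangePolynomials.
Variable K : fieldType.
Implicit Types (th : nat -> K) (d i : nat).

Definition lagrange_poly th d i : {poly K} :=
  \prod_(j < d.+1 | (j : nat) != i) ((th i - th j)^-1 *: ('X - (th j)%:P)).

Definition newton_poly th i : {poly K} := \prod_(j < i) ('X - (th j)%:P).

Definition newton_coef0 th i : K := \prod_(j < i) (th 0%N - th j.+1)^-1.

Lemma prim_idemE n (A : 'M[K]_n.+1) th d i :
  prim_idem A th d i = horner_mx A (lagrange_poly th d i).
Proof.
rewrite rmorph_prod; apply: eq_bigr => j _.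
by rewrite -[RHS]/(horner_mx A _) horner_mxZ rmorphB /= horner_mx_X horner_mx_C.
Qed.

Lemma tau_mxE n (A : 'M[K]_n.+1) th i : tau_mx A th i = horner_mx A (newton_poly th i).
Proof.
by rewrite rmorph_prod; apply: eq_bigr => j _; rewrite rmorphB /= horner_mx_X horner_mx_C.
Qed.

Lemma lagrange_poly_node th d i k : (i <= d)%N -> (k <= d)%N ->
    (forall i j, (i <= d)%N -> (j <= d)%N -> th i = th j -> i = j) ->
  (lagrange_poly th d i).[th k] = (i == k)%:R.
Proof.
move=> le_id le_kd th_inj; rewrite horner_prod; have [<-|ne_ik] := eqVneq i k.
  apply: big1 => j ne_ji; rewrite hornerZ hornerXsubC mulVf // subr_eq0.
  by apply: contra ne_ji => /eqP/th_inj-> //; rewrite -ltnS.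
rewrite (bigD1 (Ordinal (le_kd : (k < d.+1)%N))) /=; last by rewrite eq_sym.
by rewrite hornerZ hornerXsubC subrr mulr0 mul0r.
Qed.

Lemma lagrange_poly0E th d : (forall j, (0 < j <= d)%N -> th 0%N != th j) ->
  lagrange_poly th d 0 = \sum_(i < d.+1) newton_coef0 th i *: newton_poly th i.
Proof.
move=> th0_neq.
suff partial k : (k <= d)%N -> \sum_(i < k.+1) newton_coef0 th i *: newton_poly th i =
    newton_coef0 th k *: \prod_(j < k) ('X - (th j.+1)%:P).
  by rewrite partial // /lagrange_poly big_mkcond big_ord_recl /= mul1r scaler_prod.
elim: k => [|k IHk] lt_kd.
  by rewrite big_ord1 /newton_coef0 /newton_poly !big_ord0 scale1r.
rewrite big_ord_recr /= IHk ?(ltnW lt_kd) // /newton_coef0 /newton_poly.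
rewrite big_ord_recr [in RHS]big_ord_recr big_ord_recl /=.
set c := \prod_(j < k) _; set p := \prod_(j < k) _.
have gap0 : th 0%N - th k.+1 != 0 by rewrite subr_eq0 th0_neq.
have -> : 'X - (th k.+1)%:P = ('X - (th 0%N)%:P) + (th 0%N - th k.+1)%:P.
  by rewrite polyCB addrA subrK.
by rewrite mulrDr [p * _%:P]mulrC mul_polyC scalerDr scalerA mulfVK // addrC [p * _]mulrC.
Qed.

End LagrangePolynomials.

Lemma eigenvector_horner_mx (K : fieldType) n (A : 'M[K]_n.+1) (v : 'rV_n.+1) a p :
  v *m A = a *: v -> v *m horner_mx A p = p.[a] *: v.
Proof.
move=> vA; elim/poly_ind: p => [|p c IHp]; first by rewrite rmorph0 mulmx0 horner0 scale0r.
rewrite rmorphD rmorphM /= horner_mx_X horner_mx_C hornerMXaddC mulmxDr -mulmxE.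
by rewrite mulmxA IHp -scalemxAl vA scalerA mul_mx_scalar scalerDl.
Qed.

Definition idem_decomposition (K : fieldType) m d (X : 'M[K]_m) (th : nat -> K)
    (e : nat -> 'M[K]_m) :=
  [/\ forall i j, (i <= d)%N -> (j <= d)%N -> e i *m e j = if i == j then e i else 0,
      \sum_(i < d.+1) e i = 1%:M &
      forall i, (i <= d)%N -> X *m e i = th i *: e i].

Section PrimitiveIdempotents.
Variables (K : fieldType) (n d : nat) (A : 'M[K]_n.+1) (th : nat -> K).
Hypothesis th_inj : forall i j, (i <= d)%N -> (j <= d)%N -> th i = th j -> i = j.
Hypothesis A_diag : diagonalizable A.
Hypothesis A_eig : forall a, eigenvalue A a <-> exists2 i, (i <= d)%N & a = th i.

Local Notation E := (prim_idem A th d).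

Lemma horner_mx_nodes f g :
  (forall k, (k <= d)%N -> f.[th k] = g.[th k]) -> horner_mx A f = horner_mx A g.
Proof.
move=> fg_nodes; apply/eqP; rewrite -subr_eq0 -rmorphB -dvd_mxminpoly.
move/diagonalizableP: A_diag => [rs rs_uniq /dvdp_prod_XsubC[msk minE]].
rewrite (eqp_dvdl _ minE) uniq_roots_dvdp ?uniq_rootsE ?mask_uniq //.
apply/allP => x x_msk; have : eigenvalue A x.
  by rewrite eigenvalue_root_min (eqp_root minE) root_prod_XsubC.
by case/A_eig => k le_kd ->; rewrite /root !hornerE fg_nodes // subrr.
Qed.

Lemma prim_idem_mul i j : (i <= d)%N -> (j <= d)%N ->
  E i *m E j = if i == j then E i else 0.
Proof.
move=> le_id le_jd; rewrite !prim_idemE mulmxE -rmorphM.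
have [<-|ne_ij] := eqVneq i j.
  apply: horner_mx_nodes => k le_kd; rewrite hornerM lagrange_poly_node //.
  by case: (i == k); rewrite ?mulr1 ?mulr0.
rewrite -(rmorph0 (horner_mx A)); apply: horner_mx_nodes => k le_kd.
rewrite horner0 hornerM !lagrange_poly_node //.
by have [<-|] := eqVneq i k; rewrite ?mul0r // eq_sym (negbTE ne_ij) mulr0.
Qed.

Lemma prim_idem_sum : \sum_(i < d.+1) E i = 1%:M.
Proof.
rewrite (eq_bigr _ (fun (i : 'I_d.+1) _ => prim_idemE A th d i)) -rmorph_sum.
rewrite idmxE -(rmorph1 (horner_mx A)); apply: horner_mx_nodes => k le_kd.
rewrite horner_sum hornerC (bigD1 (Ordinal (le_kd : (k < d.+1)%N))) //=.
rewrite lagrange_poly_node // eqxx.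
rewrite big1 ?addr0 // => j; rewrite -val_eqE /= => /negbTE ne_jk.
by rewrite lagrange_poly_node ?ne_jk // -ltnS.
Qed.

Lemma prim_idem_eigen i : (i <= d)%N -> E i *m A = th i *: E i.
Proof.
move=> le_id; rewrite prim_idemE -[X in _ *m X]horner_mx_X mulmxE -rmorphM -horner_mxZ.
apply: horner_mx_nodes => k le_kd; rewrite hornerM hornerX hornerZ lagrange_poly_node //.
by have [->|] := eqVneq i k; rewrite ?mulr0 ?mul0r ?mulr1 ?mul1r.
Qed.

Lemma prim_idem_neq0 i : (i <= d)%N -> E i != 0.
Proof.
move=> le_id; have /eigenvalueP[v vA v_neq0] : eigenvalue A (th i) by apply/A_eig; exists i.
apply: contraNneq v_neq0 => Ei0; have := eigenvector_horner_mx (lagrange_poly th d i) vA.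
by rewrite -prim_idemE Ei0 mulmx0 lagrange_poly_node // eqxx scale1r => ->.
Qed.

Lemma prim_idem_tr_decomposition : idem_decomposition d A^T th (fun i => (E i)^T).
Proof.
split=> [i j le_id le_jd | | i le_id].
- by rewrite -trmx_mul prim_idem_mul // eq_sym; case: eqP => [->|]; rewrite ?trmx0.
- by rewrite -trmx1 -prim_idem_sum linear_sum.
- by rewrite -trmx_mul prim_idem_eigen // linearZ.
Qed.

End PrimitiveIdempotents.

Section IdemDecomposition.
Variables (K : fieldType) (m d : nat) (X : 'M[K]_m) (th : nat -> K) (e : nat -> 'M[K]_m).
Hypothesis e_dec : idem_decomposition d X th e.

Lemma idem_decomposition_expand p (M : 'M_(p, m)) : M = \sum_(k < d.+1) M *m e k.
Proof. by case: e_dec => _ e_sum _; rewrite -mulmx_sumr e_sum mulmx1. Qed.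

Lemma idem_decomposition_eq0 p (M : 'M_(p, m)) :
  (forall j, (j <= d)%N -> M *m e j = 0) -> M = 0.
Proof.
by move=> Me; rewrite (idem_decomposition_expand M) big1 // => j _; rewrite Me // -ltnS.
Qed.

End IdemDecomposition.

(* The transpose of a tridiagonal system, for the row-vector action under which
   mxalgebra's subspaces are stable; the idempotents are kept abstract. *)
Definition row_tridiagonal_system (K : fieldType) m d (A As : 'M[K]_m)
    (th ths : nat -> K) (e es : nat -> 'M[K]_m) :=
  [/\ idem_decomposition d A th e, idem_decomposition d As ths es,
      forall i j, (i <= d)%N -> (j <= d)%N -> (i.+1 < j)%N || (j.+1 < i)%N ->
        e i *m As *m e j = 0 /\ es i *m A *m es j = 0,
      e 0%N != 0 /\ es 0%N != 0 &
      forall W : 'M_m, stablemx W A -> stablemx W As -> (W == 0) || row_full W].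

Lemma row_tridiagonal_system_sym (K : fieldType) m d (A As : 'M[K]_m) th ths e es :
  row_tridiagonal_system d A As th ths e es -> row_tridiagonal_system d As A ths th es e.
Proof.
case=> e_dec es_dec tri [e0 es0] irr; split=> // [i j le_id le_jd ij_far | W WAs WA].
  by have [-> ->] := tri i j le_id le_jd ij_far.
exact: irr.
Qed.

Lemma tridiagonal_system_tr (K : fieldType) n d (A As : 'M[K]_n.+1) th ths :
    tridiagonal_system d A As th ths ->
  row_tridiagonal_system d A^T As^T th ths
    (fun i => (prim_idem A th d i)^T) (fun i => (prim_idem As ths d i)^T).
Proof.
case=> [[A_diag As_diag] [A_eig As_eig] [th_inj ths_inj] tri irr]; split.
- exact: prim_idem_tr_decomposition.
- exact: prim_idem_tr_decomposition.
- move=> i j le_id le_jd ij_far; rewrite -!trmx_mul !mulmxA.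
  by rewrite orbC in ij_far; have [-> ->] := tri j i le_jd le_id ij_far; rewrite trmx0.
- by rewrite !trmx_eq0; split; apply: prim_idem_neq0.
- move=> W WA WAs; have := irr W^T; rewrite trmxK => /(_ WA WAs).
  by rewrite trmx_eq0 /row_full mxrank_tr.
Qed.

Section SplitSpaces.
Variables (K : fieldType) (m d : nat) (A As : 'M[K]_m) (th ths : nat -> K).
Variables e es : nat -> 'M[K]_m.
Hypothesis tds : row_tridiagonal_system d A As th ths e es.

Let e_dec : idem_decomposition d A th e. Proof. by case: tds. Qed.
Let es_dec : idem_decomposition d As ths es. Proof. by case: tds. Qed.

Definition split_space i : 'M[K]_m :=
  ((\bigcap_(j < d.+1 | (j < i)%N) kermx (e j)) :&:
   (\bigcap_(j < d.+1 | (i <= j)%N) kermx (es j)))%MS.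

Lemma sub_split_space p (M : 'M_(p, m)) i :
  (M <= split_space i)%MS <->
  (forall j, (j <= d)%N -> (j < i)%N -> M *m e j = 0) /\
  (forall j, (j <= d)%N -> (i <= j)%N -> M *m es j = 0).
Proof.
rewrite sub_capmx; split=> [/andP[/sub_bigcapmxP Me /sub_bigcapmxP Mes] | [Me Mes]].
  split=> j le_jd ij; apply/eqP; rewrite -sub_kermx.
    exact: Me (Ordinal (le_jd : (j < d.+1)%N)) ij.
  exact: Mes (Ordinal (le_jd : (j < d.+1)%N)) ij.
apply/andP; split; apply/sub_bigcapmxP => j ij; rewrite sub_kermx; apply/eqP.
  exact: Me (ltn_ord j) ij.
exact: Mes (ltn_ord j) ij.
Qed.

Lemma split_spaceP i :
  (forall j, (j <= d)%N -> (j < i)%N -> split_space i *m e j = 0) /\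
  (forall j, (j <= d)%N -> (i <= j)%N -> split_space i *m es j = 0).
Proof. exact/sub_split_space. Qed.

Lemma split_space0 : split_space 0 = 0.
Proof. by apply: (idem_decomposition_eq0 es_dec) => j le_jd; apply: (split_spaceP 0).2. Qed.

Lemma split_space_eq0 i : (d < i)%N -> split_space i = 0.
Proof.
move=> lt_di; apply: (idem_decomposition_eq0 e_dec) => j le_jd.
by apply: (split_spaceP i).1 => //; apply: leq_ltn_trans lt_di.
Qed.

Lemma split_space_shift i : (split_space i *m (A - (th i)%:M) <= split_space i.+1)%MS.
Proof.
have [Se Ses] := split_spaceP i; have [e_mul _ e_eigen] := e_dec.
have [_ _ tri _ _] := tds.
apply/sub_split_space; split=> j le_jd ij.
  rewrite -mulmxA mulmxBl e_eigen // mul_scalar_mx -scalerBl -scalemxAr.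
  move: ij; rewrite ltnS leq_eqVlt => /predU1P[->|lt_ji]; first by rewrite subrr scale0r.
  by rewrite Se // scaler0.
rewrite mulmxBr mulmxBl mul_mx_scalar -scalemxAl (Ses j le_jd (ltnW ij)) scaler0 subr0.
rewrite {1}(idem_decomposition_expand es_dec (split_space i)) !mulmx_suml big1 // => k _.
have [le_ik|lt_ki] := leqP i k; first by rewrite Ses ?mul0mx // -ltnS.
have far : (k.+1 < j)%N || (j.+1 < k)%N by rewrite (leq_ltn_trans lt_ki ij).
have [_ esAes0] := tri k j (ltn_ord k) le_jd far.
by rewrite -!mulmxA [es k *m _]mulmxA esAes0 mulmx0.
Qed.

Lemma split_space_shift_dual i :
  (split_space i.+1 *m (As - (ths i)%:M) <= split_space i)%MS.
Proof.
have [Se Ses] := split_spaceP i.+1; have [es_mul _ es_eigen] := es_dec.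
have [_ _ tri _ _] := tds.
apply/sub_split_space; split=> j le_jd ij; last first.
  rewrite -mulmxA mulmxBl es_eigen // mul_scalar_mx -scalerBl -scalemxAr.
  move: ij; rewrite leq_eqVlt => /predU1P[->|lt_ij]; first by rewrite subrr scale0r.
  by rewrite Ses // scaler0.
rewrite mulmxBr mulmxBl mul_mx_scalar -scalemxAl (Se j le_jd (ltnW ij)) scaler0 subr0.
rewrite {1}(idem_decomposition_expand e_dec (split_space i.+1)) !mulmx_suml big1 // => k _.
have [le_ki|lt_ik] := leqP k i; first by rewrite Se ?mul0mx // -ltnS.
have far : (k.+1 < j)%N || (j.+1 < k)%N by rewrite (leq_ltn_trans ij lt_ik) orbT.
have [eAse0 _] := tri k j (ltn_ord k) le_jd far.
by rewrite -!mulmxA [e k *m _]mulmxA eAse0 mulmx0.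
Qed.

Definition split_sum : 'M[K]_m := (\sum_(i < d.+2) split_space i)%MS.

Lemma split_space_sub_sum i : (i <= d.+1)%N -> (split_space i <= split_sum)%MS.
Proof. by move=> le_id; apply: (sumsmx_sup (Ordinal (le_id : (i < d.+2)%N))). Qed.

Lemma stablemx_split_sum (Y : 'M_m) (c : nat -> K) :
    (forall i, (i <= d.+1)%N ->
       (split_space i *m (Y - (c i)%:M) <= split_sum)%MS) ->
  stablemx split_sum Y.
Proof.
move=> shift; rewrite sumsmxMr; apply/sumsmx_subP => -[i lt_id] _ /=.
rewrite -[Y](subrK (c i)%:M) mulmxDr mul_mx_scalar addmx_sub ?shift //.
by rewrite scalemx_sub ?split_space_sub_sum.
Qed.

Lemma split_sum_eq0 : split_sum = 0.
Proof.
have [_ _ _ [e0_neq0 _] irr] := tds.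
have stable_A : stablemx split_sum A.
  apply: (@stablemx_split_sum _ th) => i le_id.
  apply: submx_trans (split_space_shift i) _.
  have [lt_id|lt_di] := ltnP i d.+1; first exact: split_space_sub_sum.
  by rewrite split_space_eq0 ?sub0mx // ltnS ltnW.
have stable_As : stablemx split_sum As.
  apply: (@stablemx_split_sum _ (fun i => ths i.-1)) => -[|i] le_id.
    by rewrite split_space0 mul0mx sub0mx.
  exact: submx_trans (split_space_shift_dual i) (split_space_sub_sum (ltnW le_id)).
have sum_ker : (split_sum <= kermx (e 0%N))%MS.
  apply/sumsmx_subP => -[[|i] lt_id] _; rewrite sub_kermx /=.
    by rewrite split_space0 mul0mx.
  by rewrite (split_spaceP i.+1).1.
have /orP[/eqP // | full] := irr _ stable_A stable_As.
move: sum_ker; rewrite -sub1mx in full; move/(submx_trans full).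
by rewrite sub_kermx mul1mx (negbTE e0_neq0).
Qed.

Lemma split_space1_eq0 : split_space 1 = 0.
Proof.
by apply/eqP; rewrite -submx0 -split_sum_eq0 split_space_sub_sum.
Qed.

Lemma idem0_fixed_eq0 p (M : 'M_(p, m)) : M *m es 0%N = M -> M *m e 0%N = 0 -> M = 0.
Proof.
have [es_mul _ _] := es_dec; move=> Mes0 Me0.
apply/eqP; rewrite -submx0 -split_space1_eq0; apply/sub_split_space.
split=> j le_jd; first by rewrite ltnS leqn0 => /eqP->.
by move=> j_gt0; rewrite -Mes0 -mulmxA es_mul // (ltn_eqF j_gt0) mulmx0.
Qed.

End SplitSpaces.

Lemma idem0_sandwich_neq0 (K : fieldType) m d (A As : 'M[K]_m) th ths e es :
  row_tridiagonal_system d A As th ths e es -> es 0%N *m e 0%N *m es 0%N != 0.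
Proof.
move=> tds; have [[e_mul _ _] [es_mul _ _] _ [_ es0_neq0] _] := tds.
apply: contra_neq es0_neq0 => sandwich0.
have es0e0 : es 0%N *m e 0%N = 0.
  by apply: (idem0_fixed_eq0 (row_tridiagonal_system_sym tds)); rewrite // -mulmxA e_mul.
by apply: (idem0_fixed_eq0 tds); rewrite ?es_mul.
Qed.

Lemma prim_idem0_sandwich (K : fieldType) n d (A F : 'M[K]_n.+1) th chi :
    (forall j, (0 < j <= d)%N -> th 0%N != th j) ->
    (forall i, (i <= d)%N -> F *m tau_mx A th i *m F = chi i *: F) ->
  F *m prim_idem A th d 0 *m F = (\sum_(i < d.+1) newton_coef0 th i * chi i) *: F.
Proof.
move=> th0_neq Ftau; rewrite prim_idemE lagrange_poly0E // rmorph_sum.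
rewrite mulmx_sumr mulmx_suml scaler_suml; apply: eq_bigr => i _.
have le_id : (i <= d)%N by rewrite -ltnS.
rewrite -[X in F *m X]/(horner_mx A _) horner_mxZ -tau_mxE -scalemxAr -scalemxAl.
by rewrite Ftau // scalerA.
Qed.

Section DrinfeldValue.
Variable K : fieldType.
Implicit Types (q : K) (th ths : nat -> K).

Lemma drinfeld_poly_value q d th ths chi :
    (forall j, (0 < j <= d)%N -> qint q j * (q - q^-1) != 0) ->
    (forall j, (0 < j <= d)%N ->
       (th 0%N - th j) * (ths 0%N - ths j) = - (qint q j * (q - q^-1)) ^+ 2) ->
  (drinfeld_poly q d (split_zeta th ths chi)).[((q - q^-1) ^+ 2)^-1] =
  \sum_(i < d.+1) newton_coef0 th i * chi i.
Proof.
move=> qint_neq0 gapM; rewrite horner_poly; apply: eq_bigr => -[i /= lt_id] _.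
have gapV j : (j < i)%N -> (th 0%N - th j.+1)^-1 =
    -1 * (ths 0%N - ths j.+1) / qint q j.+1 ^+ 2 * ((q - q^-1) ^+ 2)^-1.
  move=> lt_ji; have j_bd : (0 < j.+1 <= d)%N by rewrite /= (leq_trans lt_ji).
  have := qint_neq0 _ j_bd; rewrite mulf_eq0 negb_or => /andP[qint_neq0' qsub_neq0].
  move: (gapM _ j_bd); set x := _ - th _; set y := _ - ths _ => xy.
  have [x0 y0] : x != 0 /\ y != 0.
    by apply/andP; rewrite -negb_or -mulf_eq0 xy oppr_eq0 sqrf_eq0 mulf_neq0.
  have -> : x^-1 = y / (x * y) by rewrite invfM mulrCA divff // mulr1.
  rewrite xy; move: (qint q _) (q - _) qint_neq0' qsub_neq0 => c s c0 s0.
  by field; rewrite s0 c0 oppr_eq0 sqrf_eq0 mulf_neq0.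
rewrite /newton_coef0 (eq_bigr _ (fun (j : 'I_i) _ => gapV j (ltn_ord j))).
have prod_split (a s : K) (b c : 'I_i -> K) :
    \prod_(j < i) (a * b j / c j ^+ 2 * s) =
    a ^+ i * \prod_(j < i) b j / (\prod_(j < i) c j) ^+ 2 * s ^+ i.
  by rewrite !big_split /= prodfV prodrXl !prodr_const card_ord.
rewrite prod_split /split_zeta /qfact !big_add1 !big_mkord /=; ring.
Qed.

Lemma qnodes_gapM q d j : q != 0 ->
  (q ^ ((2 * 0)%:Z - d%:Z) - q ^ ((2 * j)%:Z - d%:Z)) *
  (q ^ (d%:Z - (2 * 0)%:Z) - q ^ (d%:Z - (2 * j)%:Z)) = - (q ^+ j - q ^- j) ^+ 2.
Proof.
move=> q0; rewrite !expfzDr // -!exprnN /exprz muln0 expr0 (mulnC 2 j) exprM.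
have [x0 D0] : q ^+ j != 0 /\ q ^+ d != 0 by split; rewrite expf_neq0.
by move: (q ^+ j) (q ^+ d) x0 D0 => x D x0 D0; field; rewrite x0 D0 oner_neq0.
Qed.

Lemma subr_inv_neq0 (x : K) : x != 0 -> x ^+ 2 != 1 -> x - x^-1 != 0.
Proof.
by move=> x0; apply: contra; rewrite subr_eq0 expr2 => /eqP {1}->; rewrite mulVf.
Qed.

Lemma qnodes_drinfeld_poly_value q d chi : q != 0 -> not_root_of_unity q ->
  let th i := q ^ ((2 * i)%:Z - d%:Z) in
  let ths i := q ^ (d%:Z - (2 * i)%:Z) in
  (drinfeld_poly q d (split_zeta th ths chi)).[((q - q^-1) ^+ 2)^-1] =
  \sum_(i < d.+1) newton_coef0 th i * chi i.
Proof.
move=> q0 q_nru th ths.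
have qpow_sub_neq0 j : (0 < j)%N -> q ^+ j - q ^- j != 0.
  move=> j0; apply: subr_inv_neq0; first exact: expf_neq0.
  by rewrite -exprM q_nru // muln_gt0 j0.
have qint_mulE j : qint q j * (q - q^-1) = q ^+ j - q ^- j.
  by rewrite divfK // (qpow_sub_neq0 1).
apply: drinfeld_poly_value => j /andP[j0 _]; rewrite qint_mulE ?qpow_sub_neq0 //.
exact: qnodes_gapM.
Qed.

End DrinfeldValue.

Theorem corollary8p3 (K : closedFieldType) (q : K) (n d : nat)
    (A As : 'M[K]_n.+1) (chi : nat -> K) :
  q != 0 -> not_root_of_unity q -> (1 <= d)%N ->
  let th := fun i : nat => q ^ ((2 * i)%:Z - d%:Z) in
  let ths := fun i : nat => q ^ (d%:Z - (2 * i)%:Z) in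
  tridiagonal_system d A As th ths ->
  qSerre q A As ->
  (* chi i is the scalar by which E*_0 tau_i(A) acts on E*_0 V *)
  (forall i, (i <= d)%N ->
     prim_idem As ths d 0 *m tau_mx A th i *m prim_idem As ths d 0
       = chi i *: prim_idem As ths d 0) ->
  (drinfeld_poly q d (split_zeta th ths chi)).[((q - q^-1) ^+ 2)^-1] != 0.
Proof.
move=> q0 q_nru _ th ths tds _ chi_split.
have [_ _ [th_inj _] _ _] := tds.
have th0_neq j : (0 < j <= d)%N -> th 0%N != th j.
  case/andP=> j_gt0 le_jd; apply/eqP => /(th_inj _ _ (leq0n d) le_jd) j0.
  by rewrite -j0 in j_gt0.
rewrite qnodes_drinfeld_poly_value //.
apply: contra_neq (idem0_sandwich_neq0 (tridiagonal_system_tr tds)) => value0.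
by rewrite -!trmx_mul mulmxA (prim_idem0_sandwich th0_neq chi_split) value0 scale0r trmx0.
Qed.
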